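(* Let $1\le n_1\le n$ and let $([n_1],v,e),([n_1],u,g)$ be graphs. Extend both to size $n$ by $v_i=u_i=x_*$ for $n_1+1\le i\le n$ and $e_{ii'}=g_{ii'}=y_0$ whenever $\max\{i,i'\}\ge n_1+1$. Then $D_n(([n],v,e),([n],u,g))\le D_{n_1}(([n_1],v,e),([n_1],u,g))$.
   Context: $(\mathcal X,d_{\mathcal X})$, $(\mathcal Y,d_{\mathcal Y})$ are pseudometric spaces with $\mathrm{diam}(\mathcal X)\le C_{\mathcal X}$, $\mathrm{diam}(\mathcal Y)\le C_{\mathcal Y}$, $y_0\in\mathcal Y$ a distinguished ''no edge'' element, $p\ge1$, $C_2^p\ge C_{\mathcal X}^p+C_{\mathcal Y}^p$. A new point $x_*\notin\mathcal X$ is adjoined with $d_{\mathcal X}(x,x_* )=d_{\mathcal X}(x_*,x)=C_2$ for $x\in\mathcal X$, $d_{\mathcal X}(x_*,x_* )=0$. A graph $([n],v,e)$ has $v:[n]\to\mathcal X\cup\{x_*\}$ and symmetric $e:[n]^2\to\mathcal Y$ with $e_{ii}=y_0$; $S_n$ is the set of permutations of $[n]=\{1,\dots,n\}$. For two graphs of equal size $N\ge1$, $$D_N\big(([N],a,g),([N],b,h)\big)=N^{-1/p}\min_{\pi\in S_N}\Big[\sum_{i\in[N]}d_{\mathcal X}(a_i,b_{\pi(i)})^p+\frac{1}{2(N-1)}\sum_{(i,i')\in[N]^2}d_{\mathcal Y}(g_{ii'},h_{\pi(i)\pi(i')})^p\Big]^{1/p},$$ with $0/0:=0$. *)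

From mathcomp Require Import all_boot all_order all_algebra all_fingroup.
From mathcomp Require Import all_classical all_reals.
From mathcomp Require Import exp.
Set Implicit Arguments. Unset Strict Implicit. Unset Printing Implicit Defensive.
Import Order.TTheory GRing.Theory Num.Theory.
Local Open Scope ring_scope.

Section Defs.
Variable R : realType.

Definition is_pseudometric (T : Type) (d : T -> T -> R) : Prop :=
  (forall x, d x x = 0) /\ (forall x y, d x y = d y x) /\
  (forall x y z, d x z <= d x y + d y z).

(* X ∪ {x_*} is modelled by option X, with None = x_* *)
Definition dXs (X : Type) (dX : X -> X -> R) (C2 : R) (a b : option X) : R :=
  match a, b with
  | Some x, Some y => dX x y
  | None, None => 0
  | _, _ => C2
  end.

Definition is_graph (Y : Type) (y0 : Y) (N : nat) (e : 'I_N -> 'I_N -> Y) : Prop :=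
  (forall i j, e i j = e j i) /\ (forall i, e i i = y0).

(* the bracketed cost for a permutation pi (1/(2(N-1)) with 0^-1 = 0 in MathComp) *)
Definition Dcost (X Y : Type) (dX : X -> X -> R) (dY : Y -> Y -> R) (C2 p : R)
  (N : nat) (a b : 'I_N -> option X) (g h : 'I_N -> 'I_N -> Y) (pi : {perm 'I_N}) : R :=
  \sum_(i < N) (dXs dX C2 (a i) (b (pi i))) `^ p
  + (2 * (N.-1)%:R)^-1 *
    \sum_(i < N) \sum_(i' < N) (dY (g i i') (h (pi i) (pi i'))) `^ p.

Definition DN (X Y : Type) (dX : X -> X -> R) (dY : Y -> Y -> R) (C2 p : R)
  (N : nat) (a b : 'I_N -> option X) (g h : 'I_N -> 'I_N -> Y) : R :=
  (N%:R) `^ (- p^-1) *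
  (\big[Order.min/Dcost dX dY C2 p a b g h 1]_(pi : {perm 'I_N})
      Dcost dX dY C2 p a b g h pi) `^ (p^-1).

End Defs.

Definition ext_v (X : Type) (n1 n : nat) (v : 'I_n1 -> option X) (i : 'I_n) : option X :=
  match (insub (val i) : option 'I_n1) with
  | Some j => v j
  | None => None
  end.

Definition ext_e (Y : Type) (y0 : Y) (n1 n : nat) (e : 'I_n1 -> 'I_n1 -> Y)
  (i i' : 'I_n) : Y :=
  match (insub (val i) : option 'I_n1), (insub (val i') : option 'I_n1) with
  | Some j, Some j' => e j j'
  | _, _ => y0
  end.

From mathcomp Require Import all_boot all_order all_algebra all_fingroup.
From mathcomp Require Import all_classical all_reals.
From mathcomp Require Import exp.
Set Implicit Arguments. Unset Strict Implicit. Unset Printing Implicit Defensive.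
Import Order.TTheory GRing.Theory Num.Theory.
Local Open Scope ring_scope.

(* Extend any permutation of [n1] by the identity on the padded vertices.
   Padded vertices are then matched to padded vertices, at cost 0 since
   [dXs None None = 0], and padded edges to padded edges, at cost
   [dY y0 y0 = 0]; so both sums in the cost are unchanged, while the edge
   weight 1/(2(n-1)) and the prefactor n^(-1/p) can only decrease.  For
   n1 = 1 the weight 1/(2(n1-1)) is 0 (as [0^-1 = 0]), but then the edge sum
   is 0 too, its only term being the diagonal one where e and g equal y0. *)

Lemma big_ord_widen_vanish (V : nmodType) (n1 n : nat) (h : (n1 <= n)%N)
    (F : 'I_n -> V) :
  (forall i : 'I_n, (n1 <= i)%N -> F i = 0) ->
  \sum_(i < n) F i = \sum_(j < n1) F (widen_ord h j).
Proof.
move=> F0; rewrite (bigID (fun i : 'I_n => (i < n1)%N)) /= big_ord_narrow.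
by rewrite [X in _ + X]big1 ?addr0 // => i; rewrite -leqNgt; exact: F0.
Qed.

Section WidenPerm.
Variables (n1 n : nat) (h : (n1 <= n)%N) (s : {perm 'I_n1}).

Definition widen_perm_fun (i : 'I_n) : 'I_n :=
  if insub (val i) is Some j then widen_ord h (s j) else i.

Lemma widen_perm_fun_widen (j : 'I_n1) :
  widen_perm_fun (widen_ord h j) = widen_ord h (s j).
Proof. by rewrite /widen_perm_fun /= valK. Qed.

Lemma widen_perm_fun_out (i : 'I_n) : (n1 <= i)%N -> widen_perm_fun i = i.
Proof. by move=> hi; rewrite /widen_perm_fun insubN // -leqNgt. Qed.

Lemma widen_perm_fun_inj : injective widen_perm_fun.
Proof.
have inside (i : 'I_n) : (i < n1)%N -> exists j : 'I_n1, i = widen_ord h j.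
  by move=> hi; exists (Ordinal hi); exact: val_inj.
move=> i i'; case: (ltnP i n1) => [/inside [j ->]|hi];
    case: (ltnP i' n1) => [/inside [j' ->]|hi'];
    rewrite ?widen_perm_fun_widen ?widen_perm_fun_out //.
- by move=> /(congr1 val) /= /val_inj /perm_inj ->.
- by move=> eji'; move: hi'; rewrite -eji' /= leqNgt ltn_ord.
- by move=> eij'; move: hi; rewrite eij' /= leqNgt ltn_ord.
Qed.

Definition widen_perm : {perm 'I_n} := perm widen_perm_fun_inj.

Lemma widen_perm_widen (j : 'I_n1) :
  widen_perm (widen_ord h j) = widen_ord h (s j).
Proof. by rewrite permE widen_perm_fun_widen. Qed.

Lemma widen_perm_out (i : 'I_n) : (n1 <= i)%N -> widen_perm i = i.
Proof. by move=> hi; rewrite permE widen_perm_fun_out. Qed.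

End WidenPerm.

Section Extension.
Variables (n1 n : nat) (h : (n1 <= n)%N).

Lemma ext_v_widen (X : Type) (v : 'I_n1 -> option X) (j : 'I_n1) :
  ext_v v (widen_ord h j) = v j.
Proof. by rewrite /ext_v /= valK. Qed.

Lemma ext_v_out (X : Type) (v : 'I_n1 -> option X) (i : 'I_n) :
  (n1 <= i)%N -> ext_v v i = None.
Proof. by move=> hi; rewrite /ext_v insubN // -leqNgt. Qed.

Lemma ext_e_widen (Y : Type) (y0 : Y) (e : 'I_n1 -> 'I_n1 -> Y) (j j' : 'I_n1) :
  ext_e y0 e (widen_ord h j) (widen_ord h j') = e j j'.
Proof. by rewrite /ext_e /= !valK. Qed.

Lemma ext_e_out (Y : Type) (y0 : Y) (e : 'I_n1 -> 'I_n1 -> Y) (i i' : 'I_n) :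
  (n1 <= i)%N || (n1 <= i')%N -> ext_e y0 e i i' = y0.
Proof.
rewrite /ext_e => /orP[hi|hi'].
  by rewrite insubN // -leqNgt.
by rewrite [insub (val i')]insubN -?leqNgt //; case: insub.
Qed.

End Extension.

Lemma ge0_ger_powRN (R : realType) (r : R) : 0 <= r ->
  {in Num.pos &, {homo (@powR R)^~ (- r) : x y /~ y <= x}}.
Proof.
move=> r0 x y x0 y0 yx; rewrite /= !powRN lef_pV2 ?posrE ?powR_gt0 //.
by apply: ge0_ler_powR; rewrite // nnegrE ltW.
Qed.

Lemma ler_inv_double_pred (R : numFieldType) (m n : nat) :
  (1 < m)%N -> (m <= n)%N -> (2 * n.-1%:R)^-1 <= (2 * m.-1%:R)^-1 :> R.
Proof.
move=> m1 mn; have pos k : (1 < k)%N -> 0 < 2 * k.-1%:R :> R.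
  by move=> k1; rewrite mulr_gt0 // ltr0n -ltnS prednK // ltnW.
rewrite lef_pV2 ?posrE ?pos ?(leq_trans m1) //.
by rewrite ler_pM2l // ler_nat -!subn1 leq_sub2r.
Qed.

Section Cost.
Variables (R : realType) (X Y : Type) (dX : X -> X -> R) (dY : Y -> Y -> R).
Variables (C2 p : R).

Definition vertex_cost (N : nat) (a b : 'I_N -> option X) (s : {perm 'I_N}) : R :=
  \sum_(i < N) (dXs dX C2 (a i) (b (s i))) `^ p.

Definition edge_cost (N : nat) (g h : 'I_N -> 'I_N -> Y) (s : {perm 'I_N}) : R :=
  \sum_(i < N) \sum_(i' < N) (dY (g i i') (h (s i) (s i'))) `^ p.

Lemma DcostE (N : nat) (a b : 'I_N -> option X) (g h : 'I_N -> 'I_N -> Y) s :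
  Dcost dX dY C2 p a b g h s
  = vertex_cost a b s + (2 * N.-1%:R)^-1 * edge_cost g h s.
Proof. by []. Qed.

Lemma edge_cost_ge0 (N : nat) (g h : 'I_N -> 'I_N -> Y) s : 0 <= edge_cost g h s.
Proof. by apply: sumr_ge0 => i _; apply: sumr_ge0 => i' _; exact: powR_ge0. Qed.

Lemma Dcost_ge0 (N : nat) (a b : 'I_N -> option X) (g h : 'I_N -> 'I_N -> Y) s :
  0 <= Dcost dX dY C2 p a b g h s.
Proof.
rewrite DcostE addr_ge0 ?mulr_ge0 ?edge_cost_ge0 ?invr_ge0 ?mulr_ge0 //.
by apply: sumr_ge0 => i _; exact: powR_ge0.
Qed.

Definition Dmin (N : nat) (a b : 'I_N -> option X) (g h : 'I_N -> 'I_N -> Y) : R :=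
  \big[Order.min/Dcost dX dY C2 p a b g h 1]_(s : {perm 'I_N})
    Dcost dX dY C2 p a b g h s.

Lemma DNE (N : nat) (a b : 'I_N -> option X) (g h : 'I_N -> 'I_N -> Y) :
  DN dX dY C2 p a b g h = N%:R `^ (- p^-1) * Dmin a b g h `^ p^-1.
Proof. by []. Qed.

Lemma Dmin_ge0 (N : nat) (a b : 'I_N -> option X) (g h : 'I_N -> 'I_N -> Y) :
  0 <= Dmin a b g h.
Proof. by apply: le_bigmin => [|s _]; exact: Dcost_ge0. Qed.

Lemma edge_cost_le1 (N : nat) (y0 : Y) (g h : 'I_N -> 'I_N -> Y) s :
  p != 0 -> dY y0 y0 = 0 -> (N <= 1)%N ->
  (forall i, g i i = y0) -> (forall i, h i i = y0) -> edge_cost g h s = 0.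
Proof.
move=> p0 dY0 N1 gd hd; apply: big1 => i _; apply: big1 => i' _.
have -> : i' = i.
  apply: val_inj; move: (leq_trans (ltn_ord i) N1) (leq_trans (ltn_ord i') N1).
  by rewrite !ltnS !leqn0 => /eqP/= + /eqP/= => -> ->.
by rewrite gd hd dY0 powR0.
Qed.

Section Padding.
Variables (n1 n : nat) (hn : (n1 <= n)%N) (y0 : Y).
Hypotheses (p0 : p != 0) (dY0 : dY y0 y0 = 0).

Lemma vertex_cost_ext (v u : 'I_n1 -> option X) s :
  vertex_cost (ext_v (n:=n) v) (ext_v (n:=n) u) (widen_perm hn s)
  = vertex_cost v u s.
Proof.
rewrite /vertex_cost (big_ord_widen_vanish hn) => [|i hi].
  by apply: eq_bigr => j _; rewrite widen_perm_widen !ext_v_widen.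
by rewrite widen_perm_out // !ext_v_out //= powR0.
Qed.

Lemma edge_cost_ext (e g : 'I_n1 -> 'I_n1 -> Y) s :
  edge_cost (ext_e y0 (n:=n) e) (ext_e y0 (n:=n) g) (widen_perm hn s)
  = edge_cost e g s.
Proof.
have out (i i' : 'I_n) : (n1 <= i)%N || (n1 <= i')%N ->
    dY (ext_e y0 e i i') (ext_e y0 g (widen_perm hn s i) (widen_perm hn s i'))
      `^ p = 0.
  case/orP=> hi; rewrite ext_e_out ?hi ?orbT //.
    by rewrite ext_e_out ?dY0 ?powR0 // widen_perm_out ?hi.
  by rewrite ext_e_out ?dY0 ?powR0 // [widen_perm _ _ i']widen_perm_out ?hi ?orbT.
rewrite /edge_cost (big_ord_widen_vanish hn) => [|i hi]; last first.
  by apply: big1 => i' _; rewrite out ?hi.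
apply: eq_bigr => j _; rewrite (big_ord_widen_vanish hn) => [|i' hi']; last first.
  by rewrite out ?hi' ?orbT.
by apply: eq_bigr => j' _; rewrite !widen_perm_widen !ext_e_widen.
Qed.

Lemma Dcost_ext_le (v u : 'I_n1 -> option X) (e g : 'I_n1 -> 'I_n1 -> Y) s :
  (forall i, e i i = y0) -> (forall i, g i i = y0) ->
  Dcost dX dY C2 p (ext_v (n:=n) v) (ext_v (n:=n) u)
    (ext_e y0 (n:=n) e) (ext_e y0 (n:=n) g) (widen_perm hn s)
  <= Dcost dX dY C2 p v u e g s.
Proof.
move=> ed gd; rewrite !DcostE vertex_cost_ext edge_cost_ext lerD2l.
have [n1_gt1|n1_le1] := ltnP 1 n1.
  by rewrite ler_wpM2r ?edge_cost_ge0 ?ler_inv_double_pred.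
by rewrite (edge_cost_le1 _ p0 dY0 n1_le1 ed gd) !mulr0.
Qed.

Lemma Dmin_ext_le (v u : 'I_n1 -> option X) (e g : 'I_n1 -> 'I_n1 -> Y) :
  (forall i, e i i = y0) -> (forall i, g i i = y0) ->
  Dmin (ext_v (n:=n) v) (ext_v (n:=n) u) (ext_e y0 (n:=n) e) (ext_e y0 (n:=n) g)
  <= Dmin v u e g.
Proof.
move=> ed gd; apply: le_bigmin => [|s _]; apply: le_trans (bigmin_le _ _ _) _;
  exact: Dcost_ext_le.
Qed.

End Padding.
End Cost.

Theorem lemmaC (R : realType) (X Y : Type) (dX : X -> X -> R) (dY : Y -> Y -> R)
  (CX CY C2 p : R) (y0 : Y)
  (hdX : is_pseudometric dX) (hdY : is_pseudometric dY)
  (hCX : 0 <= CX) (hCY : 0 <= CY)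
  (hdiamX : forall x x', dX x x' <= CX) (hdiamY : forall y y', dY y y' <= CY)
  (hp : 1 <= p) (hC2 : 0 <= C2) (hC2p : CX `^ p + CY `^ p <= C2 `^ p)
  (n1 n : nat) (hn1 : (1 <= n1)%N) (hn1n : (n1 <= n)%N)
  (v u : 'I_n1 -> option X) (e g : 'I_n1 -> 'I_n1 -> Y)
  (he : is_graph y0 e) (hg : is_graph y0 g) :
  DN dX dY C2 p (ext_v (n:=n) v) (ext_v (n:=n) u)
     (ext_e y0 (n:=n) e) (ext_e y0 (n:=n) g)
  <= DN dX dY C2 p v u e g.
Proof.
have p0 : p != 0 by rewrite gt_eqF // (lt_le_trans ltr01 hp).
have invp_ge0 : 0 <= p^-1 by rewrite invr_ge0 (le_trans ler01 hp).
have dY0 : dY y0 y0 = 0 by case: hdY.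
have [[_ ed] [_ gd]] := (he, hg).
rewrite !DNE; apply: ler_pM; rewrite ?powR_ge0 //.
  apply: ge0_ger_powRN; rewrite ?posrE ?ltr0n ?ler_nat //.
  exact: leq_trans hn1 hn1n.
apply: ge0_ler_powR; rewrite ?nnegrE ?Dmin_ge0 //.
exact: Dmin_ext_le.
Qed.
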